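(* Let $\Gamma\subset\mathrm{SL}_2(\mathbb{C})$ be the binary tetrahedral group, and let $S$ be the set of triples $(M_1,M_2,M_3)\in\Gamma^3$ which generate $\Gamma$, modulo simultaneous conjugation by elements of $\mathrm{SL}_2(\mathbb{C})$. Then $|S|=520$, and $S$ breaks up into exactly six geometric equivalence classes, of sizes $96,32,48,72,128,144$.
   Context: For a triple $(M_1,M_2,M_3)$ set $M_4=(M_3M_2M_1)^{-1}$, so $M_4M_3M_2M_1=1$. For $i=1,2,3$ the operation $\omega_i$ on quadruples fixes $M_j$ for $j\neq i,i+1$ and sends $(M_i,M_{i+1})\mapsto(M_{i+1},\,M_{i+1}M_iM_{i+1}^{-1})$. Two elements of $S$ are geometrically equivalent if they are related by a sequence of the operations $\omega_i^{\pm1}$ ($i=1,2,3$), simultaneous conjugation, and even sign changes (multiplying an even number of the four matrices $M_1,\dots,M_4$ by $-1$). *)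

From Stdlib Require Import Reals Relations.
From mathcomp Require Import all_boot all_order all_algebra.
From mathcomp Require Import complex Rstruct.

Set Implicit Arguments.
Unset Strict Implicit.
Unset Printing Implicit Defensive.

Import Order.TTheory GRing.Theory Num.Theory.
Local Open Scope ring_scope.

Definition C : Type := (R : rcfType)[i].

Notation mat2 := ('M[C]_2).

(* Quaternion units as 2x2 complex matrices (det 1). *)
Definition qI : mat2 := \matrix_(a < 2, b < 2)
  (if a == b then (if a == 0 then 'i else - 'i) else 0).
Definition qJ : mat2 := \matrix_(a < 2, b < 2)
  (if a == b then 0 else (if a == 0 then 1 else -1)).
Definition qK : mat2 := qI *m qJ.

(* The binary tetrahedral group, in its standard embedding into SL_2(C):
   the 24 unit Hurwitz quaternions
   +-1, +-I, +-J, +-K, (+-1 +- I +- J +- K)/2. *)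
Definition sgn (b : bool) : C := if b then -1 else 1.

Definition binary_tetrahedral : seq mat2 :=
  [:: 1; -1; qI; - qI; qJ; - qJ; qK; - qK] ++
  [seq (2%:R)^-1 *: (sgn s.1.1 *: 1 + sgn s.1.2 *: qI
                     + sgn s.2.1 *: qJ + sgn s.2.2 *: qK)
  | s <- [seq (x, y) | x <- [seq (a, b) | a <- [:: false; true], b <- [:: false; true]],
                       y <- [seq (c, d) | c <- [:: false; true], d <- [:: false; true]]]].

Definition Gamma (M : mat2) : Prop := M \in binary_tetrahedral.

Definition triple := (mat2 * mat2 * mat2)%type.

Inductive gen_by (M1 M2 M3 : mat2) : mat2 -> Prop :=
| gen_one : gen_by M1 M2 M3 1
| gen_mul : forall X Y, (X = M1 \/ X = M2 \/ X = M3 \/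
                         X = invmx M1 \/ X = invmx M2 \/ X = invmx M3) ->
            gen_by M1 M2 M3 Y -> gen_by M1 M2 M3 (X *m Y).

Definition generates_Gamma (T : triple) : Prop :=
  let: (M1, M2, M3) := T in
  [/\ Gamma M1, Gamma M2, Gamma M3 &
      forall X, gen_by M1 M2 M3 X <-> Gamma X].

Definition SL2 (P : mat2) : Prop := \det P = 1.

Definition conj_triple (P : mat2) (T : triple) : triple :=
  let: (M1, M2, M3) := T in
  (P *m M1 *m invmx P, P *m M2 *m invmx P, P *m M3 *m invmx P).

Definition conj_equiv (T T' : triple) : Prop :=
  exists2 P, SL2 P & T' = conj_triple P T.

Definition M4_of (T : triple) : mat2 :=
  let: (M1, M2, M3) := T in invmx (M3 *m M2 *m M1).

(* The braid moves omega_1, omega_2, omega_3 on quadruples, restricted to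
   the first three entries (M4 is determined by them). *)
Definition omega1 (T : triple) : triple :=
  let: (M1, M2, M3) := T in (M2, M2 *m M1 *m invmx M2, M3).
Definition omega2 (T : triple) : triple :=
  let: (M1, M2, M3) := T in (M1, M3, M3 *m M2 *m invmx M3).
Definition omega3 (T : triple) : triple :=
  let: (M1, M2, M3) := T in (M1, M2, M4_of T).

(* Even sign change: multiply M_k by e_k (k = 1..4), with e_k = +-1 and an
   even number of e_k equal to -1; the resulting triple is (e1 M1, e2 M2, e3 M3)
   (and then M4 is indeed multiplied by e4). *)
Definition even_sign_change (T T' : triple) : Prop :=
  let: (M1, M2, M3) := T in
  exists e1 e2 e3 e4 : bool,
    ~~ (e1 (+) e2 (+) e3 (+) e4) /\
    T' = (sgn e1 *: M1, sgn e2 *: M2, sgn e3 *: M3).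

Definition geo_step (T T' : triple) : Prop :=
  [/\ generates_Gamma T, generates_Gamma T' &
      (T' = omega1 T \/ T' = omega2 T \/ T' = omega3 T \/
       conj_equiv T T' \/ even_sign_change T T')].

(* Geometric equivalence: generated by the omega_i^{+-1}, conjugation and
   even sign changes (inverses are covered by the symmetric closure). *)
Definition geo_equiv : triple -> triple -> Prop := clos_refl_sym_trans _ geo_step.
Definition T0 : triple := (1%R, 1%R, 1%R).

(* The binary tetrahedral group is realised by the 24 Hurwitz units
   (a + b i + c j + d k) / 2, so after indexing its elements by 0..23 every
   statement about triples becomes a finite computation on integer
   quaternions, checked by reflection.  A triple generates Γ exactly when it
   lies in none of the maximal subgroups (Q8 and the four cyclic groups of
   order 6).  The binary octahedral group normalises Γ; conjugating by its
   elements gives a canonical form for triples, and canonical generating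
   triples are pairwise non-conjugate because already the traces of M_i,
   M_i M_j, M1 M2 M3 and M1 M3 M2 separate them.  The six classes are
   computed by a breadth-first search along the braid moves and sign
   changes.  Each class is closed under these moves up to conjugacy, and the
   moves commute with conjugation, so no sequence of moves leaves a class. *)
From Pilot Require Import Defs.
From Stdlib Require Import Reals Relations.
From mathcomp Require Import all_boot all_order all_algebra.
From mathcomp Require Import complex Rstruct ring.

Set Implicit Arguments.
Unset Strict Implicit.
Unset Printing Implicit Defensive.

Import Order.TTheory GRing.Theory Num.Theory.
Local Open Scope ring_scope.
Local Notation C := Defs.C.

Definition mx2 (a b c d : C) : mat2 :=
  \matrix_(i < 2, j < 2) if i == 0 then (if j == 0 then a else b) else (if j == 0 then c else d).

Lemma mx2_mul a b c d a' b' c' d' : mx2 a b c d *m mx2 a' b' c' d' =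
  mx2 (a * a' + b * c') (a * b' + b * d') (c * a' + d * c') (c * b' + d * d').
Proof.
apply/matrixP => i j; rewrite !mxE !big_ord_recl big_ord0 !mxE /=.
by case: i => [[|[|//]] ?]; case: j => [[|[|//]] ?]; rewrite /= addr0.
Qed.

Lemma mx2_add a b c d a' b' c' d' :
  mx2 a b c d + mx2 a' b' c' d' = mx2 (a + a') (b + b') (c + c') (d + d').
Proof. by apply/matrixP => i j; rewrite !mxE; case: (i == 0); case: (j == 0). Qed.

Lemma mx2_scale s a b c d : s *: mx2 a b c d = mx2 (s * a) (s * b) (s * c) (s * d).
Proof. by apply/matrixP => i j; rewrite !mxE; case: (i == 0); case: (j == 0). Qed.

Lemma mx2_det a b c d : \det (mx2 a b c d) = a * d - b * c.
Proof.
rewrite (expand_det_row _ 0) !big_ord_recl big_ord0 /cofactor !det_mx11 !mxE /=.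
by rewrite addr0 expr0 expr1 mul1r mulN1r mulrN.
Qed.

Lemma mx2_trace a b c d : \tr (mx2 a b c d) = a + d.
Proof. by rewrite /mxtrace !big_ord_recl big_ord0 !mxE /= addr0. Qed.

Lemma mx2_1 : 1 = mx2 1 0 0 1 :> mat2.
Proof. by apply/matrixP => i j; rewrite !mxE; case: i => [[|[|//]] ?]; case: j => [[|[|//]] ?]. Qed.

Lemma mx2_qI : qI = mx2 'i 0 0 (- 'i).
Proof. by apply/matrixP => i j; rewrite !mxE; case: i => [[|[|//]] ?]; case: j => [[|[|//]] ?]. Qed.

Lemma mx2_qJ : qJ = mx2 0 1 (-1) 0.
Proof. by apply/matrixP => i j; rewrite !mxE; case: i => [[|[|//]] ?]; case: j => [[|[|//]] ?]. Qed.

Lemma mx2_qK : qK = mx2 0 'i 'i 0.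
Proof. by rewrite /qK mx2_qI mx2_qJ mx2_mul; congr mx2; ring. Qed.

Lemma sqr_i : 'i * 'i = -1 :> C.
Proof. by rewrite -expr2 sqrCi. Qed.

Definition quat := (int * int * int * int)%type.

Definition qmul (x y : quat) : quat :=
  let: (a, b, c, d) := x in let: (a', b', c', d') := y in
  (a * a' - b * b' - c * c' - d * d', a * b' + b * a' + c * d' - d * c',
   a * c' - b * d' + c * a' + d * b', a * d' + b * c' - c * b' + d * a').

Definition qnorm (x : quat) : int := let: (a, b, c, d) := x in a ^+ 2 + b ^+ 2 + c ^+ 2 + d ^+ 2.

Definition qdouble (x : quat) : quat := let: (a, b, c, d) := x in (a *+ 2, b *+ 2, c *+ 2, d *+ 2).

Definition qmx (x : quat) : mat2 :=
  let: (a, b, c, d) := x in a%:~R *: 1 + b%:~R *: qI + c%:~R *: qJ + d%:~R *: qK.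

Lemma qmxE a b c d : qmx (a, b, c, d) =
  mx2 (a%:~R + b%:~R * 'i) (c%:~R + d%:~R * 'i) (- c%:~R + d%:~R * 'i) (a%:~R - b%:~R * 'i).
Proof. by rewrite /qmx mx2_1 mx2_qI mx2_qJ mx2_qK !mx2_scale !mx2_add; congr mx2; ring. Qed.

Lemma qmxM x y : qmx x *m qmx y = qmx (qmul x y).
Proof.
case: x => [[[a b] c] d]; case: y => [[[a' b'] c'] d'].
by rewrite !qmxE mx2_mul; congr mx2; rewrite ?(rmorphD, rmorphB, rmorphM) /=; ring: sqr_i.
Qed.

Lemma qmx_double x : qmx (qdouble x) = 2%:R *: qmx x.
Proof.
case: x => [[[a b] c] d]; rewrite !qmxE mx2_scale; congr mx2; rewrite ?rmorphMn /=; ring.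
Qed.

Lemma qmx_det x : \det (qmx x) = (qnorm x)%:~R.
Proof.
case: x => [[[a b] c] d]; rewrite qmxE mx2_det /= ?(rmorphD, rmorphXn) /=; ring: sqr_i.
Qed.

Lemma qmx_trace x : \tr (qmx x) = 2%:R * (x.1.1.1)%:~R.
Proof. by case: x => [[[a b] c] d]; rewrite qmxE mx2_trace /=; ring. Qed.

Lemma qmx_inj : injective qmx.
Proof.
pose coords (M : mat2) := [:: \tr M; \tr (M *m qI); \tr (M *m qJ); \tr (M *m qK)].
have coords_qmx a b c d : coords (qmx (a, b, c, d)) =
    map (fun n : int => 2%:R * n%:~R) [:: a; - b; - c; - d].
  rewrite /coords qmxE mx2_qI mx2_qJ mx2_qK !mx2_mul !mx2_trace /= ?rmorphN.
  by congr [:: _; _; _; _]; ring: sqr_i.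
have inj2 : injective (fun n : int => 2%:R * n%:~R : C).
  by move=> m n /mulfI; rewrite pnatr_eq0 => /(_ isT) /intr_inj.
move=> [[[a b] c] d] [[[a' b'] c'] d'] /(congr1 coords); rewrite !coords_qmx.
by case/(inj_map inj2) => -> /oppr_inj -> /oppr_inj -> /oppr_inj ->.
Qed.

Definition isgn (b : bool) : int := if b then -1 else 1.

Definition sign_quads : seq (bool * bool * (bool * bool)) :=
  [seq (x, y) | x <- [seq (a, b) | a <- [:: false; true], b <- [:: false; true]],
                y <- [seq (c, d) | c <- [:: false; true], d <- [:: false; true]]].

(* Twice the 24 Hurwitz units, in the order of [binary_tetrahedral]. *)
Definition hurwitz2 : seq quat :=
  map qdouble [:: (1, 0, 0, 0); (-1, 0, 0, 0); (0, 1, 0, 0); (0, -1, 0, 0);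
                  (0, 0, 1, 0); (0, 0, -1, 0); (0, 0, 0, 1); (0, 0, 0, -1)] ++
  [seq (isgn s.1.1, isgn s.1.2, isgn s.2.1, isgn s.2.2) | s <- sign_quads].

Definition elt_of (x : quat) : mat2 := 2%:R^-1 *: qmx x.

Lemma intr_isgn b : (isgn b)%:~R = sgn b :> C.
Proof. by case: b. Qed.

Lemma qmx_axes (n : int) :
  [/\ qmx (n, 0, 0, 0) = n%:~R *: 1, qmx (0, n, 0, 0) = n%:~R *: qI,
       qmx (0, 0, n, 0) = n%:~R *: qJ & qmx (0, 0, 0, n) = n%:~R *: qK].
Proof.
by split; rewrite qmxE ?mx2_1 ?mx2_qI ?mx2_qJ ?mx2_qK mx2_scale; congr mx2; ring.
Qed.

Lemma elt_of_double x : elt_of (qdouble x) = qmx x.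
Proof. by rewrite /elt_of qmx_double scalerA mulVf ?pnatr_eq0 // scale1r. Qed.

Lemma binary_tetrahedral_hurwitz : binary_tetrahedral = map elt_of hurwitz2.
Proof.
rewrite map_cat; apply: f_equal2.
  have [e1 e2 e3 e4] := qmx_axes 1; have [f1 f2 f3 f4] := qmx_axes (-1).
  rewrite -map_comp (eq_map elt_of_double); cbn [map].
  by rewrite e1 e2 e3 e4 f1 f2 f3 f4 intrN !scale1r !scaleN1r.
rewrite -map_comp; apply: eq_map => -[[a b] [c d]].
by rewrite /elt_of /qmx /= !intr_isgn.
Qed.

Definition I24 := iota 0 24.
Definition unit2 (k : nat) : quat := nth (0, 0, 0, 0) hurwitz2 k.
Definition elt (k : nat) : mat2 := elt_of (unit2 k).

Definition mul_table : seq (seq nat) :=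
  [seq [seq index (qmul (unit2 k) (unit2 l)) (map qdouble hurwitz2) | l <- I24] | k <- I24].
Definition mulI (k l : nat) : nat := nth 0%N (nth [::] mul_table k) l.
Definition inv_table : seq nat := [seq index 0%N (map (mulI k) I24) | k <- I24].
Definition invI (k : nat) : nat := nth 0%N inv_table k.
Arguments mulI : simpl never.
Arguments invI : simpl never.

Definition hurwitz_closed :=
  all (fun k => all (fun l => qmul (unit2 k) (unit2 l) \in map qdouble hurwitz2) I24) I24.
Definition hurwitz_inverses := all (fun k => 0%N \in map (mulI k) I24) I24.

Lemma hurwitz_certificate : [&& uniq hurwitz2, hurwitz_closed & hurwitz_inverses].
Proof. by vm_compute. Qed.

Lemma size_hurwitz2 : size hurwitz2 = 24%N.
Proof. by []. Qed.

Lemma mem_I24 k : (k \in I24) = (k < 24)%N.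
Proof. by rewrite mem_iota. Qed.

Lemma Gamma_elt M : Gamma M <-> exists2 k, (k < 24)%N & M = elt k.
Proof.
rewrite /Gamma binary_tetrahedral_hurwitz; split => [/mapP[x x_in ->] | [k k_lt ->]].
  by exists (index x hurwitz2); rewrite ?index_mem // /elt /unit2 nth_index.
by rewrite /elt /unit2 map_f // mem_nth ?size_hurwitz2.
Qed.

Lemma elt_Gamma k : (k < 24)%N -> Gamma (elt k).
Proof. by move=> k_lt; apply/Gamma_elt; exists k. Qed.

Lemma elt_nth k : (k < 24)%N -> elt k = nth 0 binary_tetrahedral k.
Proof. by move=> k_lt; rewrite binary_tetrahedral_hurwitz (nth_map (0, 0, 0, 0)). Qed.

Lemma elt0 : elt 0 = 1.
Proof. by rewrite elt_nth. Qed.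

Lemma elt1 : elt 1 = -1.
Proof. by rewrite elt_nth. Qed.

Lemma elt_ofM x y z : qmul x y = qdouble z -> elt_of x *m elt_of y = elt_of z.
Proof.
move=> xyz; rewrite /elt_of -scalemxAl -scalemxAr qmxM xyz qmx_double !scalerA.
by rewrite -mulrA mulVf ?pnatr_eq0 // mulr1.
Qed.

Lemma mulIE k l : (k < 24)%N -> (l < 24)%N ->
  mulI k l = index (qmul (unit2 k) (unit2 l)) (map qdouble hurwitz2).
Proof.
move=> k_lt l_lt; rewrite /mulI.
rewrite (nth_map 0%N); last by rewrite size_iota.
by rewrite (nth_map 0%N) ?nth_iota // size_iota.
Qed.

Lemma mulI_spec k l : (k < 24)%N -> (l < 24)%N ->
  (mulI k l < 24)%N /\ qmul (unit2 k) (unit2 l) = qdouble (unit2 (mulI k l)).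
Proof.
move=> k_lt l_lt; case/and3P: hurwitz_certificate => _ cl _.
have kl_in : qmul (unit2 k) (unit2 l) \in map qdouble hurwitz2.
  by apply: (allP (allP cl k _)); rewrite mem_I24.
have idx_lt := kl_in; rewrite -index_mem size_map in idx_lt.
rewrite (mulIE k_lt l_lt); split; first by rewrite -size_hurwitz2.
by rewrite /unit2 -(nth_map _ (qdouble (0, 0, 0, 0)) _ idx_lt) nth_index.
Qed.

Lemma mulI_lt k l : (k < 24)%N -> (l < 24)%N -> (mulI k l < 24)%N.
Proof. by move=> k_lt l_lt; case: (mulI_spec k_lt l_lt). Qed.

Lemma eltM k l : (k < 24)%N -> (l < 24)%N -> elt k *m elt l = elt (mulI k l).
Proof. by move=> k_lt l_lt; apply: elt_ofM; case: (mulI_spec k_lt l_lt). Qed.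

Lemma invI_spec k : (k < 24)%N -> (invI k < 24)%N /\ mulI k (invI k) = 0%N.
Proof.
move=> k_lt; case/and3P: hurwitz_certificate => _ _ /allP/(_ k).
rewrite mem_I24 => /(_ k_lt) k_inv.
have -> : invI k = index 0%N (map (mulI k) I24).
  by rewrite /invI (nth_map 0%N) ?nth_iota // size_iota.
have idx_lt := k_inv; rewrite -index_mem size_map in idx_lt.
have idx_val : nth 0%N I24 (index 0%N (map (mulI k) I24)) = index 0%N (map (mulI k) I24).
  by rewrite nth_iota.
split; first by rewrite -(size_iota 0 24).
by rewrite -[in mulI k _]idx_val -(nth_map _ 0%N _ idx_lt) nth_index.
Qed.

Lemma invI_lt k : (k < 24)%N -> (invI k < 24)%N.
Proof. by case/invI_spec. Qed.

Lemma eltV k : (k < 24)%N -> invmx (elt k) = elt (invI k).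
Proof.
move=> k_lt; have [inv_lt kV] := invI_spec k_lt.
have e : elt k *m elt (invI k) = 1%:M by rewrite eltM // kV elt0.
have [kU _] := mulmx1_unit e.
by rewrite -[invmx _]mulmx1 -e mulmxA mulVmx // mul1mx.
Qed.

Lemma elt_of_inj : injective elt_of.
Proof.
move=> x y /(congr1 (fun M : mat2 => 2%:R *: M)).
by rewrite /elt_of !scalerA mulfV ?pnatr_eq0 // !scale1r => /qmx_inj.
Qed.

Lemma elt_inj k l : (k < 24)%N -> (l < 24)%N -> elt k = elt l -> k = l.
Proof.
move=> k_lt l_lt /elt_of_inj /eqP; case/and3P: hurwitz_certificate => uniq_h _ _.
by rewrite nth_uniq ?size_hurwitz2 // => /eqP.
Qed.

Lemma elt_trace k : \tr (elt k) = ((unit2 k).1.1.1)%:~R.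
Proof. by rewrite /elt /elt_of mxtraceZ qmx_trace mulrA mulVf ?pnatr_eq0 // mul1r. Qed.

Definition itriple := (nat * nat * nat)%type.

Definition valid (t : itriple) : bool := let: (a, b, c) := t in [&& a < 24, b < 24 & c < 24]%N.

Definition triple_of (t : itriple) : triple := let: (a, b, c) := t in (elt a, elt b, elt c).

Definition gens_of (t : itriple) : seq nat := let: (a, b, c) := t in [:: a; b; c].

Definition forall3 (P : itriple -> bool) : bool :=
  all (fun a => all (fun b => all (fun c => P (a, b, c)) I24) I24) I24.

Lemma forall3P (P : itriple -> bool) t : forall3 P -> valid t -> P t.
Proof.
case: t => [[a b] c] /allP P_all /and3P[a_lt b_lt c_lt].
by apply: (allP (allP (P_all a _) b _)); rewrite mem_I24.
Qed.

Lemma valid_gens t g : valid t -> g \in gens_of t -> (g < 24)%N.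
Proof. by case: t => [[a b] c] /and3P[? ? ?]; rewrite !inE => /or3P[] /eqP ->. Qed.

Lemma gen_by_closed (P : nat -> Prop) a b c X : valid (a, b, c) ->
  P 0%N -> (forall k, P k -> k < 24)%N ->
  (forall g k, g \in gens_of (a, b, c) -> P k -> P (mulI g k) /\ P (mulI (invI g) k)) ->
  gen_by (elt a) (elt b) (elt c) X -> exists2 k, P k & X = elt k.
Proof.
move=> abc P0 P_lt P_mul; elim => [|G Y G_gen _ [k Pk ->]].
  by exists 0%N; rewrite ?elt0.
have k_lt := P_lt k Pk.
have [g g_in [->|->]] : exists2 g, g \in gens_of (a, b, c) & G = elt g \/ G = invmx (elt g).
- by case: G_gen => [|[|[|[|[|]]]]] ->; [exists a|exists b|exists c|exists a|exists b|exists c];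
    rewrite ?inE ?eqxx ?orbT; auto.
- have [Pgk _] := P_mul g k g_in Pk; have g_lt := valid_gens abc g_in.
  by exists (mulI g k); last rewrite eltM.
- have [_ Pgk] := P_mul g k g_in Pk; have g_lt := valid_gens abc g_in.
  by exists (mulI (invI g) k); last rewrite eltV // eltM ?invI_lt.
Qed.

Lemma gen_by_Gamma a b c X : valid (a, b, c) -> gen_by (elt a) (elt b) (elt c) X -> Gamma X.
Proof.
move=> abc /(gen_by_closed (P := fun k => (k < 24)%N) abc) [] //.
- by move=> g k /(valid_gens abc) g_lt k_lt; rewrite !mulI_lt ?invI_lt.
- by move=> k k_lt ->; apply: elt_Gamma.
Qed.

Fixpoint saturate (T : eqType) (f : T -> T) (n : nat) (x : T) : T :=
  if n is n'.+1 then (let y := f x in if y == x then x else saturate f n' y) else x.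

Lemma saturate_ind (T : eqType) (f : T -> T) (P : T -> Prop) n x :
  P x -> (forall y, P y -> P (f y)) -> P (saturate f n x).
Proof. by elim: n x => [|n IHn] x Px Pf //=; case: ifP => _ //; apply: IHn; auto. Qed.

(* Closing a set of indices, given by its characteristic vector, under left
   multiplication by the elements of [gs]: [k] joins once [g^-1 k] is in. *)
Definition span_step (gs : seq nat) (S : seq bool) : seq bool :=
  let hs := map invI gs in
  [seq nth false S k || has (fun h => nth false S (mulI h k)) hs | k <- I24].

Definition span (gs : seq nat) : seq bool :=
  saturate (span_step gs) 24 [seq k == 0%N | k <- I24].

Definition spans (t : itriple) : bool := all (nth false (span (gens_of t))) I24.

Lemma span_gen_by a b c k : valid (a, b, c) -> (k < 24)%N ->
  nth false (span [:: a; b; c]) k -> gen_by (elt a) (elt b) (elt c) (elt k).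
Proof.
move=> /and3P[a_lt b_lt c_lt]; move: k.
apply: (saturate_ind (P := fun S => forall k, (k < 24)%N -> nth false S k ->
  gen_by (elt a) (elt b) (elt c) (elt k))) => [k k_lt|S IH k k_lt].
  by rewrite (nth_map 0%N) ?size_iota // nth_iota // add0n => /eqP ->; rewrite elt0; apply: gen_one.
rewrite (nth_map 0%N) ?size_iota // nth_iota // add0n => /orP[/IH|]; first exact.
have elt_left g : (g < 24)%N -> elt g *m elt (mulI (invI g) k) = elt k.
  move=> g_lt; rewrite -eltM ?invI_lt // mulmxA eltM ?invI_lt //.
  by case: (invI_spec g_lt) => _ ->; rewrite elt0 mul1mx.
rewrite /= orbF => /or3P[] /IH; rewrite ?mulI_lt ?invI_lt // => gen.
- by rewrite -(elt_left a a_lt); apply: gen_mul; auto.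
- by rewrite -(elt_left b b_lt); apply: gen_mul; auto.
- by rewrite -(elt_left c c_lt); apply: gen_mul; auto.
Qed.

(* [Q8] and the four cyclic subgroups of order 6 (the maximal subgroups). *)
Definition subgroups : seq (seq bool) := map span [:: [:: 2; 4]; [:: 8]; [:: 9]; [:: 10]; [:: 11]]%N.

Definition proper_subgroup (H : seq bool) : bool :=
  [&& nth false H 0,
      all (fun k => nth false H k ==>
        nth false H (invI k) && all (fun l => nth false H l ==> nth false H (mulI k l)) I24) I24
    & ~~ all (nth false H) I24].

Definition in_proper_subgroup (t : itriple) : bool :=
  has (fun H => all (nth false H) (gens_of t)) subgroups.

Definition generating (t : itriple) : bool := ~~ in_proper_subgroup t.

Lemma subgroups_proper : all proper_subgroup subgroups.
Proof. by vm_compute. Qed.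

Lemma generation_certificate : forall3 (fun t => in_proper_subgroup t || spans t).
Proof. by vm_compute. Qed.

Lemma proper_subgroup_not_generates H t : valid t -> proper_subgroup H ->
  all (nth false H) (gens_of t) -> ~ generates_Gamma (triple_of t).
Proof.
case: t => [[a b] c] abc /and3P[H0 /allP H_cl /allPn[k k_in Hk]] /allP gH [_ _ _ gen].
have H_inv x : (x < 24)%N -> nth false H x -> nth false H (invI x).
  by move=> x_lt Hx; have := H_cl x; rewrite mem_I24 => /(_ x_lt)/implyP/(_ Hx)/andP[].
have H_mul x y : (x < 24)%N -> (y < 24)%N -> nth false H x -> nth false H y ->
    nth false H (mulI x y).
  move=> x_lt y_lt Hx Hy; have := H_cl x; rewrite mem_I24 => /(_ x_lt)/implyP/(_ Hx).
  by case/andP=> _ /allP/(_ y); rewrite mem_I24 => /(_ y_lt)/implyP; apply.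
rewrite mem_I24 in k_in.
have : gen_by (elt a) (elt b) (elt c) (elt k) by apply/gen/elt_Gamma.
case/(gen_by_closed (P := fun k => (k < 24)%N && nth false H k) abc) =>
    [||g l g_in /andP[l_lt Hl]|l /andP[l_lt Hl] e_kl].
- by [].
- by move=> ? /andP[].
- have g_lt := valid_gens abc g_in; have Hg := gH g g_in; have gi_lt := invI_lt g_lt.
  by split; apply/andP; split; rewrite ?mulI_lt ?H_mul ?H_inv.
by move: Hk; rewrite (elt_inj k_in l_lt e_kl) Hl.
Qed.

Lemma generates_triple_ofP t : valid t ->
  generates_Gamma (triple_of t) <-> generating t.
Proof.
move=> vt; split => [gen | not_sub].
  apply/hasP => -[H H_sub gH].
  exact: proper_subgroup_not_generates vt (allP subgroups_proper H H_sub) gH gen.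
case: t vt not_sub => [[a b] c] abc not_sub; have /and3P[a_lt b_lt c_lt] := abc.
split; [exact: elt_Gamma | exact: elt_Gamma | exact: elt_Gamma |].
move=> X; split; first exact: gen_by_Gamma.
case/Gamma_elt => k k_lt ->; apply: span_gen_by => //.
by move: (forall3P generation_certificate abc); rewrite (negbTE not_sub) => /allP; apply; rewrite mem_I24.
Qed.

Lemma invmx_right (A B : mat2) : A *m B = 1%:M -> invmx A = B.
Proof.
move=> AB; have [A_unit _] := mulmx1_unit AB.
by rewrite -[invmx A]mulmx1 -AB mulmxA mulVmx // mul1mx.
Qed.

Lemma SL2_unit P : SL2 P -> P \in unitmx.
Proof. by rewrite unitmxE => ->; apply: unitr1. Qed.

Lemma conj_mulmx (P A B : mat2) : P \in unitmx ->
  (P *m A *m invmx P) *m (P *m B *m invmx P) = P *m (A *m B) *m invmx P.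
Proof. by move=> P_unit; rewrite !mulmxA mulmxKV. Qed.

Lemma conj_invmx (P A : mat2) : P \in unitmx ->
  invmx (P *m A *m invmx P) = P *m invmx A *m invmx P.
Proof.
move=> P_unit; have [A_unit | A_nonunit] := boolP (A \in unitmx).
  by apply: invmx_right; rewrite conj_mulmx // mulmxV // mulmx1 mulmxV.
have PA_nonunit : P *m A *m invmx P \notin unitmx.
  by rewrite !unitmx_mul unitmx_inv P_unit andbT.
by rewrite (invmx_out PA_nonunit) (invmx_out A_nonunit).
Qed.

Lemma conj_scale (P A : mat2) (s : C) : P *m (s *: A) *m invmx P = s *: (P *m A *m invmx P).
Proof. by rewrite -scalemxAr -scalemxAl. Qed.

Lemma conj_equiv_refl T : conj_equiv T T.
Proof.
exists 1%:M; first by rewrite /SL2 det1.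
by case: T => [[M1 M2 M3]] /=; rewrite invmx1 !mul1mx !mulmx1.
Qed.

Lemma conj_equiv_sym T T' : conj_equiv T T' -> conj_equiv T' T.
Proof.
case=> P SP ->; have P_unit := SL2_unit SP.
exists (invmx P); first by rewrite /SL2 det_inv SP invr1.
by case: T => [[M1 M2 M3]] /=; rewrite invmxK !mulmxA mulVmx // !mul1mx !mulmxKV.
Qed.

Lemma conj_equiv_trans T1 T2 T3 : conj_equiv T1 T2 -> conj_equiv T2 T3 -> conj_equiv T1 T3.
Proof.
case=> P SP ->; case=> Q SQ ->; have [P_unit Q_unit] := (SL2_unit SP, SL2_unit SQ).
exists (Q *m P); first by rewrite /SL2 det_mulmx SP SQ mulr1.
have QP_inv : invmx (Q *m P) = invmx P *m invmx Q.
  by apply: invmx_right; rewrite mulmxA mulmxK // mulmxV.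
by case: T1 => [[M1 M2 M3]] /=; rewrite QP_inv !mulmxA.
Qed.

Lemma omega_conj P T : P \in unitmx ->
  [/\ omega1 (conj_triple P T) = conj_triple P (omega1 T),
      omega2 (conj_triple P T) = conj_triple P (omega2 T) &
      omega3 (conj_triple P T) = conj_triple P (omega3 T)].
Proof.
by move=> P_unit; case: T => [[M1 M2 M3]]; split; rewrite /= ?conj_invmx // ?conj_mulmx // ?conj_invmx.
Qed.

Definition sign_change (e : bool * bool * bool) (T : triple) : triple :=
  let: (M1, M2, M3) := T in (sgn e.1.1 *: M1, sgn e.1.2 *: M2, sgn e.2 *: M3).

Lemma even_sign_changeP T T' :
  even_sign_change T T' <-> exists e, T' = sign_change e T.
Proof.
case: T => [[M1 M2 M3]]; split => [[e1 [e2 [e3 [e4 [_ ->]]]]] | [[[e1 e2] e3] ->]].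
  by exists (e1, e2, e3).
by exists e1, e2, e3, (e1 (+) e2 (+) e3); rewrite addbb.
Qed.

Lemma sign_change_conj P T e : sign_change e (conj_triple P T) = conj_triple P (sign_change e T).
Proof. by case: T => [[M1 M2 M3]]; rewrite /= !conj_scale. Qed.

Definition words (T : triple) : seq mat2 :=
  let: (M1, M2, M3) := T in
  [:: M1; M2; M3; M1 *m M2; M1 *m M3; M2 *m M3; M1 *m M2 *m M3; M1 *m M3 *m M2].

Definition trace_vector (T : triple) : seq C := map mxtrace (words T).

Lemma conj_equiv_trace_vector T T' : conj_equiv T T' -> trace_vector T = trace_vector T'.
Proof.
case=> P /SL2_unit P_unit ->; rewrite /trace_vector.
have -> : words (conj_triple P T) = map (fun X => P *m X *m invmx P) (words T).
  by case: T => [[M1 M2 M3]]; rewrite /= !(conj_mulmx _ _ P_unit).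
rewrite -map_comp; apply: eq_map => X /=.
by rewrite mxtrace_mulC mulmxA mulVmx ?mul1mx.
Qed.

Definition word_indices (t : itriple) : seq nat :=
  let: (a, b, c) := t in
  [:: a; b; c; mulI a b; mulI a c; mulI b c; mulI (mulI a b) c; mulI (mulI a c) b].

Definition traces (t : itriple) : seq int := [seq (unit2 k).1.1.1 | k <- word_indices t].

Lemma trace_vector_triple_of t : valid t -> trace_vector (triple_of t) = map intr (traces t).
Proof.
case: t => [[a b] c] /and3P[a_lt b_lt c_lt]; rewrite /trace_vector.
have -> : words (triple_of (a, b, c)) = map elt (word_indices (a, b, c)).
  by rewrite /= !eltM ?mulI_lt.
by rewrite /traces -!map_comp; apply: eq_map => k; rewrite /= elt_trace.
Qed.

Lemma conj_equiv_traces s t : valid s -> valid t ->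
  conj_equiv (triple_of s) (triple_of t) -> traces s = traces t.
Proof.
move=> vs vt /conj_equiv_trace_vector; rewrite !trace_vector_triple_of //.
by apply: inj_map; apply: intr_inj.
Qed.

Definition pm_pairs : seq (int * int) := [seq (a, b) | a <- [:: -1; 0; 1], b <- [:: -1; 0; 1]].

Definition cube : seq quat := [seq (x.1, x.2, y.1, y.2) | x <- pm_pairs, y <- pm_pairs].

Definition lead_pos (x : quat) : bool :=
  let: (a, b, c, d) := x in
  (0 < a) || (a == 0) && ((0 < b) || (b == 0) && ((0 < c) || (c == 0) && (0 < d))).

Definition conjugates_to (u : quat) (k l : nat) : bool := qmul u (unit2 k) == qmul (unit2 l) u.

Definition normalizes (u : quat) : bool := all (fun k => has (conjugates_to u k) I24) I24.

(* The 24 elements of the binary octahedral group, up to sign and scaling. *)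
Definition conjugators : seq quat := [seq u <- cube | lead_pos u && normalizes u].

Definition conj_tables : seq (seq nat) :=
  [seq [seq find (conjugates_to u k) I24 | k <- I24] | u <- conjugators].

Lemma qnorm_eq0 x : (qnorm x == 0) = (x == (0, 0, 0, 0)).
Proof.
case: x => [[[a b] c] d]; rewrite /qnorm !paddr_eq0 ?addr_ge0 ?sqr_ge0 // !sqrf_eq0.
by rewrite !xpair_eqE.
Qed.

Lemma SL2_rescale (A : mat2) : \det A != 0 ->
  exists2 P, SL2 P & forall X Y, A *m X = Y *m A -> P *m X *m invmx P = Y.
Proof.
move=> detA; have A_unit : A \in unitmx by rewrite unitmxE unitfE.
set s := sqrtC (\det A)^-1; have s2 : s ^+ 2 = (\det A)^-1 by rewrite sqrtCK.
have s_neq0 : s != 0.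
  apply/eqP => s0; move: s2; rewrite s0 expr0n /= => /esym/eqP.
  by rewrite invr_eq0 (negbTE detA).
have SP : SL2 (s *: A) by rewrite /SL2 detZ s2 mulVf.
exists (s *: A) => // X Y AXY.
rewrite invmxZ ?(SL2_unit SP) // -scalemxAl -scalemxAr -scalemxAl scalerA mulVf // scale1r.
by rewrite AXY mulmxK.
Qed.

Lemma conj_tableP p : p \in conj_tables -> exists2 P, SL2 P &
  forall k, (k < 24)%N -> (nth 0%N p k < 24)%N /\ P *m elt k *m invmx P = elt (nth 0%N p k).
Proof.
case/mapP => u; rewrite mem_filter => /andP[/andP[u_pos /allP u_norm] _] ->.
have det_u : \det (qmx u) != 0.
  by rewrite qmx_det intr_eq0 qnorm_eq0; apply: contraTneq u_pos => ->.
have [P SP conjP] := SL2_rescale det_u; exists P => // k k_lt.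
have k_has : has (conjugates_to u k) I24 by apply: u_norm; rewrite mem_I24.
set l := find (conjugates_to u k) I24.
have l_lt : (l < 24)%N by move: k_has; rewrite has_find size_iota.
have /eqP ukl : conjugates_to u k l by have := nth_find 0%N k_has; rewrite nth_iota.
have -> : nth 0%N [seq find (conjugates_to u k) I24 | k <- I24] k = l.
  by rewrite (nth_map 0%N) ?nth_iota ?size_iota.
split; first exact: l_lt.
by apply: conjP; rewrite /elt /elt_of -scalemxAr -scalemxAl !qmxM ukl.
Qed.

Definition om1I (t : itriple) : itriple := let: (a, b, c) := t in (b, mulI (mulI b a) (invI b), c).
Definition om2I (t : itriple) : itriple := let: (a, b, c) := t in (a, c, mulI (mulI c b) (invI c)).
Definition om3I (t : itriple) : itriple := let: (a, b, c) := t in (a, b, invI (mulI (mulI c b) a)).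

(* Index 1 is -1. *)
Definition sgnI (e : bool) (k : nat) : nat := if e then mulI k 1 else k.

Definition sgnt (e : bool * bool * bool) (t : itriple) : itriple :=
  let: (a, b, c) := t in (sgnI e.1.1 a, sgnI e.1.2 b, sgnI e.2 c).

Definition sign_triples : seq (bool * bool * bool) :=
  [seq (x, y) | x <- [seq (a, b) | a <- [:: false; true], b <- [:: false; true]],
                y <- [:: false; true]].

Definition step_images (t : itriple) : seq itriple :=
  [:: om1I t; om2I t; om3I t] ++ [seq sgnt e t | e <- sign_triples].

Lemma omega_triple_of t : valid t ->
  [/\ omega1 (triple_of t) = triple_of (om1I t), omega2 (triple_of t) = triple_of (om2I t)
    & omega3 (triple_of t) = triple_of (om3I t)].
Proof.
case: t => [[a b] c] /and3P[a_lt b_lt c_lt].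
by split; rewrite /= ?eltV ?eltM ?eltV ?mulI_lt ?invI_lt.
Qed.

Lemma sgnI_elt e k : (k < 24)%N -> sgn e *: elt k = elt (sgnI e k) /\ (sgnI e k < 24)%N.
Proof.
case: e => k_lt /=; last by rewrite scale1r.
by rewrite -eltM // elt1 mulmxN mulmx1 scaleN1r mulI_lt.
Qed.

Lemma sign_change_triple_of e t : valid t -> sign_change e (triple_of t) = triple_of (sgnt e t).
Proof.
case: t => [[a b] c] /and3P[a_lt b_lt c_lt] /=.
by rewrite (sgnI_elt _ a_lt).1 (sgnI_elt _ b_lt).1 (sgnI_elt _ c_lt).1.
Qed.

Lemma step_images_valid t s : valid t -> s \in step_images t -> valid s.
Proof.
case: t => [[a b] c] /and3P[a_lt b_lt c_lt]; rewrite mem_cat => /orP[|/mapP[[[e1 e2] e3] _ ->]].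
  by rewrite !inE => /or3P[] /eqP -> /=; rewrite ?(mulI_lt, invI_lt, a_lt, b_lt, c_lt).
by rewrite /= (sgnI_elt e1 a_lt).2 (sgnI_elt e2 b_lt).2 (sgnI_elt e3 c_lt).2.
Qed.

Lemma geo_step_triple_of r s : valid r -> s \in step_images r ->
  generates_Gamma (triple_of r) -> generates_Gamma (triple_of s) ->
  geo_step (triple_of r) (triple_of s).
Proof.
move=> vr s_in gr gs; split => //; have [e1 e2 e3] := omega_triple_of vr.
move: s_in; rewrite mem_cat => /orP[|/mapP[e _ ->]].
  by rewrite !inE => /or3P[] /eqP ->; [left | right; left | do 2 right; left].
by do 4 right; apply/even_sign_changeP; exists e; rewrite sign_change_triple_of.
Qed.

Lemma geo_step_conj_image r T T' : valid r -> conj_equiv (triple_of r) T -> geo_step T T' ->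
  exists2 s, s \in step_images r & conj_equiv (triple_of s) T'.
Proof.
move=> vr [P SP ->] [_ _ step]; have P_unit := SL2_unit SP.
have [c1 c2 c3] := omega_conj (triple_of r) P_unit.
have [e1 e2 e3] := omega_triple_of vr.
case: step => [->|[->|[->|[conj_T'|]]]].
- by exists (om1I r); rewrite ?mem_head // c1 e1; exists P.
- by exists (om2I r); rewrite ?inE ?eqxx ?orbT // c2 e2; exists P.
- by exists (om3I r); rewrite ?inE ?eqxx ?orbT // c3 e3; exists P.
- exists (sgnt (false, false, false) r).
    by rewrite mem_cat; apply/orP; right; apply/mapP; exists (false, false, false).
  have -> : sgnt (false, false, false) r = r by case: (r) => [[a b] c].
  by apply: conj_equiv_trans conj_T'; exists P.
case/even_sign_changeP => -[[f1 f2] f3] ->.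
exists (sgnt (f1, f2, f3) r).
  by rewrite mem_cat; apply/orP; right; apply/mapP; exists (f1, f2, f3); case: f1; case: f2; case: f3.
by rewrite sign_change_conj -(sign_change_triple_of _ vr); exists P.
Qed.

Definition cjt (p : seq nat) (t : itriple) : itriple :=
  let: (a, b, c) := t in (nth 0%N p a, nth 0%N p b, nth 0%N p c).

Definition lex_lt (s t : itriple) : bool :=
  let: (a, b, c) := s in let: (a', b', c') := t in
  (a < a')%N || eqn a a' && ((b < b')%N || eqn b b' && (c < c')%N).

Definition canon (t : itriple) : itriple :=
  foldr (fun p m => let s := cjt p t in if lex_lt s m then s else m) t conj_tables.

Lemma canon_cases t : canon t = t \/ exists2 p, p \in conj_tables & canon t = cjt p t.
Proof.
rewrite /canon; elim: conj_tables => [|p ps IH] /=; first by left.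
case: ifP => _; first by right; exists p; rewrite ?mem_head.
by case: IH => [->|[q q_in ->]]; [left | right; exists q; rewrite // inE q_in orbT].
Qed.

Lemma canon_conj t : valid t -> valid (canon t) /\ conj_equiv (triple_of t) (triple_of (canon t)).
Proof.
case: (canon_cases t) => [->|[p /conj_tableP[P SP Pp] ->]]; first by split => //; apply: conj_equiv_refl.
case: t => [[a b] c] /and3P[a_lt b_lt c_lt].
have [pa Pa] := Pp a a_lt; have [pb Pb] := Pp b b_lt; have [pc Pc] := Pp c c_lt.
by split; [apply/and3P | exists P; rewrite //= Pa Pb Pc].
Qed.

Lemma uniq_map_inj (T U : eqType) (f : T -> U) s : uniq (map f s) -> {in s &, injective f}.
Proof.
elim: s => //= z s IH /andP[fz_notin u] x y; rewrite !inE.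
move=> /predU1P[->|x_in] /predU1P[->|y_in] // fxy.
- by move: fz_notin; rewrite fxy map_f.
- by move: fz_notin; rewrite -fxy map_f.
- exact: IH.
Qed.

Lemma flatten_uniq_nth (T : eqType) (ss : seq (seq T)) i j x : uniq (flatten ss) ->
  (i < size ss)%N -> (j < size ss)%N -> x \in nth [::] ss i -> x \in nth [::] ss j -> i = j.
Proof.
elim: ss i j => [|s ss IH] [|i] [|j] //=; rewrite cat_uniq => /and3P[_ disj u] i_lt j_lt.
- move=> x_s x_ssj; case/hasP: disj; exists x => //.
  by apply/flattenP; exists (nth [::] ss j) => //; rewrite mem_nth.
- move=> x_ssi x_s; case/hasP: disj; exists x => //.
  by apply/flattenP; exists (nth [::] ss i) => //; rewrite mem_nth.
- by move=> x_i x_j; congr S; apply: IH x_i x_j.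
Qed.

Fixpoint add_new (seen cands : seq itriple) : seq itriple :=
  if cands is x :: cands' then
    (if x \in seen then add_new seen cands' else x :: add_new (x :: seen) cands')
  else [::].

Lemma add_new_sub seen cands : {subset add_new seen cands <= cands}.
Proof.
elim: cands seen => //= x cands IH seen y.
case: ifP => _ => [/IH y_in|]; first by rewrite inE y_in orbT.
by rewrite !inE => /predU1P[->|/IH ->]; rewrite ?eqxx ?orbT.
Qed.

Definition good (s : itriple) : bool := generating s && generating (canon s).

Fixpoint bfs (n : nat) (seen front : seq itriple) : seq itriple :=
  if n is n'.+1 then
    let new := add_new seen [seq canon s | s <- flatten [seq [seq s <- step_images r | good s] | r <- front]] in
    bfs n' (seen ++ new) new
  else seen.

(* One representative of each class; [block_closed] below certifies that
   depth 9 exhausts the search. *)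
Definition roots : seq itriple := [:: (0, 2, 8); (0, 8, 11); (8, 8, 9); (8, 9, 12); (2, 8, 8); (2, 2, 8)]%N.

Definition blocksI : seq (seq itriple) := [seq bfs 9 [:: r] [:: r] | r <- roots].

Definition reps : seq itriple := flatten blocksI.

Definition block_closed (b : seq itriple) : bool :=
  all (fun r => all (fun s => canon s \in b) (step_images r)) b.

Lemma classification_certificate :
  [&& map size blocksI == [:: 96; 32; 48; 72; 128; 144]%N,
      all valid reps, all generating reps, uniq (map traces reps),
      all block_closed blocksI &
      forall3 (fun t => generating t ==> (canon t \in reps))].
Proof. by vm_compute. Qed.

Lemma blocksI_sizes : map size blocksI = [:: 96; 32; 48; 72; 128; 144]%N.
Proof. by case/and5P: classification_certificate => /eqP sizes _ _ _ _. Qed.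

Lemma size_blocksI : size blocksI = 6%N.
Proof. by rewrite -(size_map size) blocksI_sizes. Qed.

Lemma reps_valid r : r \in reps -> valid r.
Proof. by case/and5P: classification_certificate => _ /allP valid_reps _ _ _; apply: valid_reps. Qed.

Lemma reps_generating r : r \in reps -> generating r.
Proof. by case/and5P: classification_certificate => _ _ /allP gen_reps _ _; apply: gen_reps. Qed.

Lemma uniq_traces_reps : uniq (map traces reps).
Proof. by case/and5P: classification_certificate => _ _ _ u _. Qed.

Lemma blocksI_closed b r s : b \in blocksI -> r \in b -> s \in step_images r -> canon s \in b.
Proof.
case/and5P: classification_certificate => _ _ _ _ /andP[/allP cl _].
by move=> /cl /allP b_cl /b_cl /allP r_cl /r_cl.
Qed.

Lemma canon_in_reps t : valid t -> generating t -> canon t \in reps.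
Proof.
case/and5P: classification_certificate => _ _ _ _ /andP[_ complete] vt gt.
exact: (implyP (forall3P complete vt) gt).
Qed.

Lemma reps_conj_eq r r' : r \in reps -> r' \in reps ->
  conj_equiv (triple_of r) (triple_of r') -> r = r'.
Proof.
move=> r_in r'_in /conj_equiv_traces; rewrite !reps_valid // => /(_ isT isT).
exact: (uniq_map_inj uniq_traces_reps).
Qed.

Lemma triple_of_generating T : generates_Gamma T -> exists2 t, valid t & T = triple_of t.
Proof.
case: T => [[M1 M2 M3]] [/Gamma_elt[a a_lt ->] /Gamma_elt[b b_lt ->] /Gamma_elt[c c_lt ->] _].
by exists (a, b, c); rewrite //= a_lt b_lt c_lt.
Qed.

Definition in_block (b : seq itriple) (T : triple) : Prop :=
  exists2 r, r \in b & conj_equiv (triple_of r) T.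

Lemma in_block_step b T T' : b \in blocksI -> geo_step T T' -> in_block b T -> in_block b T'.
Proof.
move=> b_in step [r r_in rT].
have vr : valid r by apply: reps_valid; apply/flattenP; exists b.
have [s s_in sT'] := geo_step_conj_image vr rT step.
exists (canon s); first exact: blocksI_closed b_in r_in s_in.
have [_ /conj_equiv_sym] := canon_conj (step_images_valid vr s_in).
by move/conj_equiv_trans; apply.
Qed.

Lemma in_block_unique i j T : (i < 6)%N -> (j < 6)%N ->
  in_block (nth [::] blocksI i) T -> in_block (nth [::] blocksI j) T -> i = j.
Proof.
have nth_reps k r : (k < 6)%N -> r \in nth [::] blocksI k -> r \in reps.
  by move=> k_lt r_in; apply/flattenP; exists (nth [::] blocksI k); rewrite ?mem_nth ?size_blocksI.
move=> i_lt j_lt [r r_in rT] [r' r'_in r'T].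
have rr' : r = r'.
  apply: reps_conj_eq (nth_reps i r i_lt r_in) (nth_reps j r' j_lt r'_in) _.
  exact: conj_equiv_trans rT (conj_equiv_sym r'T).
have u : uniq (flatten blocksI) by apply: map_uniq uniq_traces_reps.
rewrite rr' in r_in.
by apply: (flatten_uniq_nth u _ _ r_in r'_in); rewrite size_blocksI.
Qed.

Lemma in_block_exists T : generates_Gamma T ->
  exists2 i, (i < 6)%N & in_block (nth [::] blocksI i) T.
Proof.
move=> gT; have [t vt eT] := triple_of_generating gT; subst T.
have gt : generating t := (generates_triple_ofP vt).1 gT.
have /flattenP[b b_in ct_in] := canon_in_reps vt gt.
exists (index b blocksI); first by rewrite -size_blocksI index_mem.
exists (canon t); first by rewrite nth_index.
by apply: conj_equiv_sym; case: (canon_conj vt).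
Qed.

Lemma geo_equiv_in_block T T' : geo_equiv T T' -> forall i, (i < 6)%N ->
  in_block (nth [::] blocksI i) T <-> in_block (nth [::] blocksI i) T'.
Proof.
have b_in i : (i < 6)%N -> nth [::] blocksI i \in blocksI by move=> i_lt; rewrite mem_nth ?size_blocksI.
elim => [T1 T2 step i i_lt|//|T1 T2 _ IH i i_lt|T1 T2 T3 _ IH12 _ IH23 i i_lt].
- split; first exact: in_block_step (b_in i i_lt) step.
  move=> T2_in; have [gT1 _ _] := step.
  have [j j_lt T1_in] := in_block_exists gT1.
  have T2_in' := in_block_step (b_in j j_lt) step T1_in.
  by rewrite (in_block_unique i_lt j_lt T2_in T2_in').
- by rewrite IH.
- by rewrite IH12 ?IH23.
Qed.

Lemma geo_step_canon s : valid s -> generating s -> generating (canon s) ->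
  geo_step (triple_of s) (triple_of (canon s)).
Proof.
move=> vs gs gcs; have [vcs conj_cs] := canon_conj vs.
have Gs := (generates_triple_ofP vs).2 gs; have Gcs := (generates_triple_ofP vcs).2 gcs.
split; [exact Gs | exact Gcs | do 3 right; left; exact conj_cs].
Qed.

Definition geo_reachable (r x : itriple) : Prop :=
  [/\ valid x, generating x & geo_equiv (triple_of r) (triple_of x)].

Lemma bfs_sound r n seen front :
  (forall x, x \in seen -> geo_reachable r x) -> {subset front <= seen} ->
  forall x, x \in bfs n seen front -> geo_reachable r x.
Proof.
elim: n seen front => [|n IH] seen front seen_ok front_seen; first exact: seen_ok.
apply: IH => [x|x x_new]; last by rewrite mem_cat x_new orbT.
rewrite mem_cat => /orP[/seen_ok //|].
move=> /add_new_sub /mapP[s /flattenP[l /mapP[r' r'_in ->]]]; rewrite mem_filter.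
case/andP=> /andP[gs gcs] s_in ->.
have [vr' gr' er'] := seen_ok r' (front_seen r' r'_in).
have vs := step_images_valid vr' s_in; have [vcs _] := canon_conj vs.
have Gr' := (generates_triple_ofP vr').2 gr'.
have Gs := (generates_triple_ofP vs).2 gs.
split; [exact: vcs | exact: gcs | apply: rst_trans er' _].
apply: rst_trans (rst_step _ _ _ _ (geo_step_triple_of vr' s_in Gr' Gs)) _.
exact: rst_step (geo_step_canon vs gs gcs).
Qed.

Lemma mem_bfs_seen n seen front : {subset seen <= bfs n seen front}.
Proof.
elim: n seen front => [|n IH] seen front x x_in; first exact: x_in.
by apply: IH; rewrite mem_cat x_in.
Qed.

Lemma blocksI_geo_equiv b x y : b \in blocksI -> x \in b -> y \in b ->
  geo_equiv (triple_of x) (triple_of y).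
Proof.
case/mapP => r r_in -> x_in y_in.
have r_rep : r \in reps.
  apply/flattenP; exists (bfs 9 [:: r] [:: r]); first by apply/mapP; exists r.
  by apply: mem_bfs_seen; apply: mem_head.
have reach_ok z : z \in bfs 9 [:: r] [:: r] -> geo_reachable r z.
  apply: bfs_sound => // z'; rewrite inE => /eqP ->.
  by split; [apply: reps_valid | apply: reps_generating | apply: rst_refl].
have [_ _ ex] := reach_ok x x_in; have [_ _ ey] := reach_ok y y_in.
exact: rst_trans (rst_sym _ _ _ _ ex) ey.
Qed.

Lemma reps_generates T : T \in map triple_of reps -> generates_Gamma T.
Proof.
by case/mapP => r r_in ->; apply/(generates_triple_ofP (reps_valid r_in)); apply: reps_generating.
Qed.

Lemma reps_complete T : generates_Gamma T -> exists2 T', T' \in map triple_of reps & conj_equiv T T'.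
Proof.
move=> gT; have [t vt eT] := triple_of_generating gT; subst T.
have gt : generating t := (generates_triple_ofP vt).1 gT.
exists (triple_of (canon t)); first by apply: map_f; apply: canon_in_reps.
by case: (canon_conj vt).
Qed.

Lemma reps_not_conj i j : (i < size reps)%N -> (j < size reps)%N -> i <> j ->
  ~ conj_equiv (triple_of (nth (0, 0, 0)%N reps i)) (triple_of (nth (0, 0, 0)%N reps j)).
Proof.
move=> i_lt j_lt ij conj_ij; apply: ij; apply/eqP.
rewrite -(nth_uniq (0, 0, 0)%N i_lt j_lt (map_uniq uniq_traces_reps)); apply/eqP.
by apply: reps_conj_eq conj_ij; apply: mem_nth.
Qed.

Lemma blocks_not_geo_equiv i j x y : (i < 6)%N -> (j < 6)%N -> i <> j ->
  x \in nth [::] blocksI i -> y \in nth [::] blocksI j -> ~ geo_equiv (triple_of x) (triple_of y).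
Proof.
move=> i_lt j_lt ij x_in y_in /geo_equiv_in_block/(_ i i_lt)[x_to_y _].
have y_i : in_block (nth [::] blocksI i) (triple_of y).
  by apply: x_to_y; exists x; [exact: x_in | exact: conj_equiv_refl].
apply: ij; apply: (in_block_unique i_lt j_lt y_i).
by exists y; [exact: y_in | exact: conj_equiv_refl].
Qed.

Theorem mainTheorem2 :
  exists blocks : seq (seq triple),
    map size blocks = [:: 96; 32; 48; 72; 128; 144]%N /\
        size (flatten blocks) = 520%N /\
        (forall T, T \in flatten blocks -> generates_Gamma T) /\
        (forall T, generates_Gamma T ->
           exists2 T', T' \in flatten blocks & conj_equiv T T') /\
        (forall i j, (i < size (flatten blocks))%N -> (j < size (flatten blocks))%N ->
           i <> j -> ~ conj_equiv (nth T0 (flatten blocks) i) (nth T0 (flatten blocks) j)) /\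
        (forall b, b \in blocks -> forall T T', T \in b -> T' \in b -> geo_equiv T T') /\
        (forall i j, (i < size blocks)%N -> (j < size blocks)%N -> i <> j ->
           forall T T', T \in nth [::] blocks i -> T' \in nth [::] blocks j ->
             ~ geo_equiv T T').
Proof.
exists (map (map triple_of) blocksI); rewrite -map_flatten -/reps size_map.
have sizes : map size (map (map triple_of) blocksI) = [:: 96; 32; 48; 72; 128; 144]%N.
  by rewrite -map_comp -blocksI_sizes; apply: eq_map => b; rewrite /= size_map.
have size_reps : size reps = 520%N by rewrite size_flatten /shape blocksI_sizes.
split; first exact: sizes.
split; first exact: size_reps.
split; first exact: reps_generates.
split; first exact: reps_complete.
split=> [i j i_lt j_lt ij|].
  rewrite (nth_map (0, 0, 0)%N T0 triple_of i_lt) (nth_map (0, 0, 0)%N T0 triple_of j_lt).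
  exact: (reps_not_conj i_lt j_lt ij).
split=> [b /mapP[b' b'_in ->] T T' /mapP[x x_in ->] /mapP[y y_in ->]|].
  exact: blocksI_geo_equiv b'_in x_in y_in.
rewrite size_map size_blocksI => i j i_lt j_lt ij T T'.
have i_lt' : (i < size blocksI)%N by rewrite size_blocksI.
have j_lt' : (j < size blocksI)%N by rewrite size_blocksI.
rewrite (nth_map [::] _ _ i_lt') (nth_map [::] _ _ j_lt') => /mapP[x x_in ->] /mapP[y y_in ->].
apply: (blocks_not_geo_equiv i_lt j_lt ij x_in y_in).
Qed.
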